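(* Let $(X,d,\preceq)$ be an ordered metric space such that $(X,d)$ is complete, and let $f,g:X\to X$ satisfy: (i) $f(X)\subseteq g(X)$; (ii) $f$ is $g$-comparable; (iii) $(f,g)$ is compatible; (iv) $g$ is continuous; (v) either $f$ is continuous or $(X,d,\preceq)$ has the $g$-TCC property; (vi) there exists $x_0\in X$ with $g(x_0)\prec\succ f(x_0)$; (vii) there exists $\alpha\in[0,1)$ with $d(fx,fy)\le\alpha\, d(gx,gy)$ for all $x,y\in X$ with $g(x)\prec\succ g(y)$; $(u_0)$ for each $x,y\in X$, $C(fx,fy,\prec\succ,g(X))$ is nonempty. Then $f$ and $g$ have a unique common fixed point.
   Context: An ordered metric space $(X,d,\preceq)$ is a nonempty set $X$ with a metric $d$ and a partial order $\preceq$. For $x,y\in X$, write $x\prec\succ y$ if $x\preceq y$ or $y\preceq x$. $f$ is $g$-comparable if $g(x)\prec\succ g(y)$ implies $f(x)\prec\succ f(y)$. $(f,g)$ is compatible if $\lim_n d(gfx_n,fgx_n)=0$ whenever $\{g(x_n)\}$ and $\{f(x_n)\}$ converge to the same point of $X$. A sequence $\{x_n\}$ is termwise monotone if $x_n\prec\succ x_{n+1}$ for all $n\ge0$. $(X,d,\preceq)$ has the $g$-TCC property if for every termwise monotone sequence $\{x_n\}$ in $X$ converging to $x\in X$ there is a subsequence with $g(x_{n_k})\prec\succ g(x)$ for all $k$. For $E\subseteq X$ and $a,b\in E$, $C(a,b,\prec\succ,E)$ is the class of finite families $e_1,\dots,e_k\in E$ with $k\ge2$, $e_1=a$, $e_k=b$,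 and $e_i\prec\succ e_{i+1}$ for $1\le i\le k-1$. A common fixed point is $x\in X$ with $x=g(x)=f(x)$. *)

From Stdlib Require Import Reals.
Open Scope R_scope.

Definition is_metric {X : Type} (d : X -> X -> R) : Prop :=
  (forall x y, 0 <= d x y) /\
  (forall x y, d x y = 0 <-> x = y) /\
  (forall x y, d x y = d y x) /\
  (forall x y z, d x z <= d x y + d y z).

Definition is_partial_order {X : Type} (le : X -> X -> Prop) : Prop :=
  (forall x, le x x) /\
  (forall x y, le x y -> le y x -> x = y) /\
  (forall x y z, le x y -> le y z -> le x z).

Definition comparable {X : Type} (le : X -> X -> Prop) (x y : X) : Prop :=
  le x y \/ le y x.

Definition converges_to {X : Type} (d : X -> X -> R) (u : nat -> X) (l : X) : Prop :=
  forall eps, eps > 0 -> exists N, forall n, (n >= N)%nat -> d (u n) l < eps.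

Definition cauchy {X : Type} (d : X -> X -> R) (u : nat -> X) : Prop :=
  forall eps, eps > 0 -> exists N, forall m n, (m >= N)%nat -> (n >= N)%nat ->
    d (u m) (u n) < eps.

Definition complete {X : Type} (d : X -> X -> R) : Prop :=
  forall u, cauchy d u -> exists l, converges_to d u l.

Definition continuous_map {X : Type} (d : X -> X -> R) (h : X -> X) : Prop :=
  forall x eps, eps > 0 -> exists delta, delta > 0 /\
    forall y, d x y < delta -> d (h x) (h y) < eps.

Definition g_comparable {X : Type} (le : X -> X -> Prop) (f g : X -> X) : Prop :=
  forall x y, comparable le (g x) (g y) -> comparable le (f x) (f y).

Definition compatible {X : Type} (d : X -> X -> R) (f g : X -> X) : Prop :=
  forall (u : nat -> X) (z : X),
    converges_to d (fun n => g (u n)) z ->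
    converges_to d (fun n => f (u n)) z ->
    Un_cv (fun n => d (g (f (u n))) (f (g (u n)))) 0.

Definition termwise_monotone {X : Type} (le : X -> X -> Prop) (u : nat -> X) : Prop :=
  forall n, comparable le (u n) (u (S n)).

Definition g_TCC {X : Type} (d : X -> X -> R) (le : X -> X -> Prop) (g : X -> X) : Prop :=
  forall (u : nat -> X) (x : X), termwise_monotone le u -> converges_to d u x ->
    exists (phi : nat -> nat), (forall k, Nat.lt (phi k) (phi (S k))) /\
      forall k, comparable le (g (u (phi k))) (g x).

(* C(a,b,≺≻,E) nonempty: a finite family e_1..e_k (k>=2) in E, e_1=a, e_k=b,
   consecutive terms comparable. Encoded as a function e on indices 1..k. *)
Definition chain_class_nonempty {X : Type} (le : X -> X -> Prop) (a b : X)
    (E : X -> Prop) : Prop :=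
  exists (k : nat) (e : nat -> X), (k >= 2)%nat /\
    (forall i, (1 <= i <= k)%nat -> E (e i)) /\
    e 1%nat = a /\ e k = b /\
    (forall i, (1 <= i <= k - 1)%nat -> comparable le (e i) (e (S i))).

Definition image {X : Type} (g : X -> X) : X -> Prop := fun y => exists x, y = g x.

(* Starting from x0, choose x_{n+1} with g x_{n+1} = f x_n.  The contraction, applied along
   this Jungck sequence (whose g-values stay pairwise comparable by g-comparability), makes
   consecutive g-values shrink geometrically, so they converge to some z.  Compatibility and
   continuity turn z into a coincidence point, g z = f z, and compatibility at a coincidence
   point shows that w = g z is one as well.  Any two coincidence points u, v are joined by a
   comparable chain through g(X) from f u to f v; running Jungck sequences from every link of
   the chain, the contraction squeezes d(g u, g v) below alpha^n C for all n, so g u = g v.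
   Hence g w = g z = w = f w, and every common fixed point equals w. *)

From Stdlib Require Import Reals Lra Lia ClassicalEpsilon.
Open Scope R_scope.

Lemma eq0_of_le_pow_bound (al a C : R) :
  0 <= al < 1 -> 0 <= a -> (forall n, a <= al ^ n * C) -> a = 0.
Proof.
  intros Hal Ha Hbound.
  destruct (Req_dec a 0) as [E | Hne]; [exact E |].
  exfalso.
  assert (HC : 0 < C).
  { specialize (Hbound 0%nat). simpl in Hbound. lra. }
  assert (Hy : 0 < a / C) by (apply Rdiv_lt_0_compat; lra).
  destruct (pow_lt_1_zero al ltac:(rewrite Rabs_pos_eq; lra) _ Hy) as [N HN].
  specialize (HN N (le_n _)). rewrite Rabs_pos_eq in HN by (apply pow_le; lra).
  specialize (Hbound N).
  apply (Rmult_lt_compat_r C) in HN; [| exact HC].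
  unfold Rdiv in HN. rewrite Rmult_assoc, Rinv_l, Rmult_1_r in HN; lra.
Qed.

Section MetricSpace.

Variables (X : Type) (d : X -> X -> R).
Hypothesis Hd : is_metric d.

Lemma metric_ge0 x y : 0 <= d x y.
Proof. apply Hd. Qed.

Lemma metric_eq0 x y : d x y = 0 -> x = y.
Proof. apply Hd. Qed.

Lemma metric_diag x : d x x = 0.
Proof. apply Hd. reflexivity. Qed.

Lemma metric_sym x y : d x y = d y x.
Proof. apply Hd. Qed.

Lemma metric_triangle x y z : d x z <= d x y + d y z.
Proof. apply Hd. Qed.

Lemma converges_to_unique u l l' :
  converges_to d u l -> converges_to d u l' -> l = l'.
Proof.
  intros Hl Hl'. apply metric_eq0, Rle_antisym; [| apply metric_ge0].
  apply Rle_plus_epsilon. intros eps Heps.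
  destruct (Hl (eps / 2)) as [N1 HN1]; [lra |].
  destruct (Hl' (eps / 2)) as [N2 HN2]; [lra |].
  set (n := Nat.max N1 N2).
  specialize (HN1 n ltac:(lia)). specialize (HN2 n ltac:(lia)).
  pose proof (metric_triangle l (u n) l'). rewrite (metric_sym l (u n)) in *. lra.
Qed.

Lemma converges_to_const x : converges_to d (fun _ => x) x.
Proof. intros eps Heps. exists 0%nat. intros. rewrite metric_diag. exact Heps. Qed.

Lemma converges_to_comp h u z :
  continuous_map d h -> converges_to d u z -> converges_to d (fun n => h (u n)) (h z).
Proof.
  intros Hh Hu eps Heps.
  destruct (Hh z eps Heps) as [delta [Hdelta Hcont]].
  destruct (Hu delta Hdelta) as [N HN].
  exists N. intros n Hn. rewrite metric_sym. apply Hcont. rewrite metric_sym. auto.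
Qed.

Lemma converges_to_shift u l :
  converges_to d u l -> converges_to d (fun n => u (S n)) l.
Proof.
  intros Hu eps Heps. destruct (Hu eps Heps) as [N HN].
  exists N. intros n Hn. apply HN. lia.
Qed.

Lemma converges_to_subseq u l (phi : nat -> nat) :
  (forall k, Nat.lt (phi k) (phi (S k))) ->
  converges_to d u l -> converges_to d (fun k => u (phi k)) l.
Proof.
  intros Hphi Hu eps Heps. destruct (Hu eps Heps) as [N HN].
  assert (Hid : forall k, (k <= phi k)%nat).
  { induction k as [| k IH]; [lia |]. specialize (Hphi k). unfold Nat.lt in Hphi. lia. }
  exists N. intros n Hn. apply HN. specialize (Hid n). lia.
Qed.

Lemma converges_to_close v w l :
  converges_to d v l -> Un_cv (fun n => d (v n) (w n)) 0 -> converges_to d w l.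
Proof.
  intros Hv Hvw eps Heps.
  destruct (Hv (eps / 2)) as [N1 HN1]; [lra |].
  destruct (Hvw (eps / 2)) as [N2 HN2]; [lra |].
  exists (Nat.max N1 N2). intros n Hn.
  specialize (HN1 n ltac:(lia)). specialize (HN2 n ltac:(lia)).
  unfold R_dist in HN2. rewrite Rminus_0_r, Rabs_pos_eq in HN2 by apply metric_ge0.
  pose proof (metric_triangle (w n) (v n) l). rewrite (metric_sym (w n) (v n)) in *. lra.
Qed.

Lemma converges_to_dominated v w l l' :
  (forall n, d (v n) l' <= d (w n) l) -> converges_to d w l -> converges_to d v l'.
Proof.
  intros Hdom Hw eps Heps. destruct (Hw eps Heps) as [N HN].
  exists N. intros n Hn. eapply Rle_lt_trans; [apply Hdom | auto].
Qed.

Section GeometricSteps.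

Variables (al D : R) (a : nat -> X).
Hypothesis Hal : 0 <= al < 1.
Hypothesis Hsteps : forall n, d (a n) (a (S n)) <= al ^ n * D.

Lemma dist_le_geometric_tail m k :
  (1 - al) * d (a m) (a (m + k)%nat) <= (al ^ m - al ^ (m + k)) * D.
Proof.
  induction k as [| k IH].
  - rewrite Nat.add_0_r, metric_diag. lra.
  - rewrite Nat.add_succ_r.
    pose proof (metric_triangle (a m) (a (m + k)%nat) (a (S (m + k)))) as Htri.
    pose proof (Hsteps (m + k)%nat) as Hstep.
    simpl. set (P := al ^ (m + k)) in *.
    assert ((1 - al) * d (a m) (a (S (m + k)))
            <= (1 - al) * (d (a m) (a (m + k)%nat) + d (a (m + k)%nat) (a (S (m + k)))))
      by (apply Rmult_le_compat_l; lra).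
    assert ((1 - al) * d (a (m + k)%nat) (a (S (m + k))) <= (1 - al) * (P * D))
      by (apply Rmult_le_compat_l; lra).
    nra.
Qed.

Lemma cauchy_of_geometric_steps : cauchy d a.
Proof.
  assert (HD : 0 <= D).
  { pose proof (Hsteps 0%nat). pose proof (metric_ge0 (a 0%nat) (a 1%nat)). simpl in *. lra. }
  assert (Hfar : forall m n, (m <= n)%nat -> (1 - al) * d (a m) (a n) <= al ^ m * D).
  { intros m n Hmn. pose proof (dist_le_geometric_tail m (n - m)) as Htail.
    replace (m + (n - m))%nat with n in Htail by lia.
    assert (0 <= al ^ n * D) by (apply Rmult_le_pos; [apply pow_le |]; lra).
    lra. }
  intros eps Heps.
  assert (Hy : 0 < eps * (1 - al) / (D + 1)).
  { apply Rdiv_lt_0_compat; [apply Rmult_lt_0_compat |]; lra. }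
  destruct (pow_lt_1_zero al ltac:(rewrite Rabs_pos_eq; lra) _ Hy) as [N HN].
  assert (Hord : forall m n, (N <= m)%nat -> (m <= n)%nat -> d (a m) (a n) < eps).
  { intros m n Hm Hmn. specialize (HN m Hm).
    rewrite Rabs_pos_eq in HN by (apply pow_le; lra).
    assert (al ^ m * D <= eps * (1 - al) / (D + 1) * D) by (apply Rmult_le_compat_r; lra).
    assert (eps * (1 - al) / (D + 1) * (D + 1) = eps * (1 - al)) by (field; lra).
    specialize (Hfar m n Hmn).
    apply (Rmult_lt_reg_l (1 - al)); nra. }
  exists N. intros m n Hm Hn. destruct (Nat.le_gt_cases m n).
  - apply Hord; lia.
  - rewrite metric_sym. apply Hord; lia.
Qed.

End GeometricSteps.

Lemma compatible_commute_at_coincidence f g z :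
  compatible d f g -> g z = f z -> g (f z) = f (g z).
Proof.
  intros Hcompat Hz.
  assert (Hf : converges_to d (fun _ : nat => f z) (g z)).
  { rewrite Hz. apply converges_to_const. }
  pose proof (Hcompat (fun _ => z) (g z) (converges_to_const (g z)) Hf) as Hzero.
  assert (Hself : Un_cv (fun _ : nat => d (g (f z)) (f (g z))) (d (g (f z)) (f (g z)))).
  { intros eps Heps. exists 0%nat. intros. unfold R_dist. rewrite Rminus_diag, Rabs_R0. exact Heps. }
  apply metric_eq0. exact (UL_sequence _ _ _ Hself Hzero).
Qed.

End MetricSpace.

Definition jungck_seq {X : Type} (f g : X -> X) (s : nat -> X) : Prop :=
  forall n, g (s (S n)) = f (s n).

Lemma jungck_seq_iter {X : Type} (f g h : X -> X) x :
  (forall y, f y = g (h y)) -> jungck_seq f g (fun n => Nat.iter n h x).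
Proof. intros Hh n. simpl. symmetry. apply Hh. Qed.

Lemma jungck_seq_const {X : Type} (f g : X -> X) u :
  g u = f u -> jungck_seq f g (fun _ => u).
Proof. intros Hu n. exact Hu. Qed.

Lemma jungck_seq_shift {X : Type} (f g : X -> X) s :
  jungck_seq f g s -> jungck_seq f g (fun n => s (S n)).
Proof. intros Hs n. apply Hs. Qed.

Section JungckContraction.

Variables (X : Type) (d : X -> X -> R) (le : X -> X -> Prop) (f g : X -> X) (al : R).
Hypothesis Hd : is_metric d.
Hypothesis Hle_refl : forall x, le x x.
Hypothesis Hfg : g_comparable le f g.
Hypothesis Hal : 0 <= al < 1.
Hypothesis Hcontr :
  forall x y, comparable le (g x) (g y) -> d (f x) (f y) <= al * d (g x) (g y).

Lemma jungck_seq_contract s t :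
  jungck_seq f g s -> jungck_seq f g t -> comparable le (g (s 0%nat)) (g (t 0%nat)) ->
  forall n, comparable le (g (s n)) (g (t n)) /\
            d (g (s n)) (g (t n)) <= al ^ n * d (g (s 0%nat)) (g (t 0%nat)).
Proof.
  intros Hs Ht H0 n. induction n as [| n [Hcmp Hdist]].
  - simpl. split; [exact H0 | lra].
  - rewrite Hs, Ht. split; [apply Hfg, Hcmp |].
    eapply Rle_trans; [apply Hcontr, Hcmp |].
    simpl. rewrite Rmult_assoc. apply Rmult_le_compat_l; lra.
Qed.

Lemma jungck_seq_steps s :
  jungck_seq f g s -> comparable le (g (s 0%nat)) (g (s 1%nat)) ->
  termwise_monotone le (fun n => g (s n)) /\
  forall n, d (g (s n)) (g (s (S n))) <= al ^ n * d (g (s 0%nat)) (g (s 1%nat)).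
Proof.
  intros Hs H0.
  pose proof (jungck_seq_contract s _ Hs (jungck_seq_shift _ _ _ Hs) H0) as Hcontract.
  split; intros n; apply Hcontract.
Qed.

Lemma jungck_limit_coincidence s z :
  compatible d f g -> continuous_map d g -> continuous_map d f \/ g_TCC d le g ->
  jungck_seq f g s -> termwise_monotone le (fun n => g (s n)) ->
  converges_to d (fun n => g (s n)) z -> g z = f z.
Proof.
  intros Hcompat Hg Hv Hs Hmono Hz.
  assert (Hfz : converges_to d (fun n => f (s n)) z).
  { pose proof (converges_to_shift X d _ _ Hz) as Hshift.
    intros eps Heps. destruct (Hshift eps Heps) as [N HN].
    exists N. intros n Hn. rewrite <- Hs. apply HN, Hn. }
  assert (Hfg_lim : converges_to d (fun n => f (g (s n))) (g z)).
  { apply (converges_to_close X d Hd (fun n => g (f (s n)))).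
    - apply (converges_to_comp X d Hd); assumption.
    - exact (Hcompat s z Hz Hfz). }
  destruct Hv as [Hf | Htcc].
  - apply (converges_to_unique X d Hd _ _ _ Hfg_lim).
    apply (converges_to_comp X d Hd f _ _ Hf Hz).
  - destruct (Htcc _ _ Hmono Hz) as [phi [Hphi Hcmp]].
    apply (converges_to_unique X d Hd _ _ _ (converges_to_subseq X d _ _ _ Hphi Hfg_lim)).
    apply (converges_to_dominated X d (fun k => f (g (s (phi k))))
             (fun k => g (g (s (phi k)))) (g z)).
    + intros k. pose proof (Hcontr _ _ (Hcmp k)).
      pose proof (metric_ge0 X d Hd (g (g (s (phi k)))) (g z)). nra.
    + apply (converges_to_subseq X d _ _ _ Hphi (converges_to_comp X d Hd g _ _ Hg Hz)).
Qed.

Hypothesis Hstart : forall x, exists t, t 0%nat = x /\ jungck_seq f g t.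

(* Each link of the chain starts its own Jungck sequence; consecutive sequences approach
   each other at rate al^n, and the triangle inequality sums these along the chain. *)
Lemma jungck_seq_chain_contract s t :
  jungck_seq f g s -> jungck_seq f g t ->
  chain_class_nonempty le (g (s 0%nat)) (g (t 0%nat)) (image g) ->
  exists C, forall n, d (g (s n)) (g (t n)) <= al ^ n * C.
Proof.
  intros Hs Ht [k [e [Hk [Himg [He1 [Hek Hchain]]]]]].
  assert (Hlink : forall j, (1 <= j <= k)%nat -> exists r,
            jungck_seq f g r /\ g (r 0%nat) = e j /\
            exists C, forall n, d (g (s n)) (g (r n)) <= al ^ n * C).
  { intros j. induction j as [| j IH]; intros Hj; [lia |].
    destruct (Nat.eq_dec j 0) as [-> | Hj0].
    - exists s. split; [exact Hs | split; [symmetry; exact He1 |]].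
      exists 0. intros n. rewrite (metric_diag X d Hd); lra.
    - destruct IH as [r [Hr [Hr0 [C HC]]]]; [lia |].
      destruct (Himg (S j) Hj) as [y Hy].
      destruct (Hstart y) as [r' [Hr'0 Hr']].
      assert (Hcmp : comparable le (g (r 0%nat)) (g (r' 0%nat))).
      { rewrite Hr0, Hr'0, <- Hy. apply Hchain. lia. }
      exists r'. split; [exact Hr' | split; [congruence |]].
      exists (C + d (g (r 0%nat)) (g (r' 0%nat))). intros n.
      destruct (jungck_seq_contract r r' Hr Hr' Hcmp n) as [_ Hdist].
      pose proof (metric_triangle X d Hd (g (s n)) (g (r n)) (g (r' n))).
      specialize (HC n). rewrite Rmult_plus_distr_l. lra. }
  destruct (Hlink k ltac:(lia)) as [r [Hr [Hr0 [C HC]]]].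
  assert (Hcmp : comparable le (g (r 0%nat)) (g (t 0%nat))).
  { rewrite Hr0, Hek. left. apply Hle_refl. }
  exists (C + d (g (r 0%nat)) (g (t 0%nat))). intros n.
  destruct (jungck_seq_contract r t Hr Ht Hcmp n) as [_ Hdist].
  pose proof (metric_triangle X d Hd (g (s n)) (g (r n)) (g (t n))).
  specialize (HC n). rewrite Rmult_plus_distr_l. lra.
Qed.

Lemma coincidence_value_unique u v :
  g u = f u -> g v = f v -> chain_class_nonempty le (f u) (f v) (image g) -> g u = g v.
Proof.
  intros Hu Hv Hchain.
  rewrite <- Hu, <- Hv in Hchain.
  destruct (jungck_seq_chain_contract _ _ (jungck_seq_const f g u Hu)
              (jungck_seq_const f g v Hv) Hchain) as [C HC].
  apply (metric_eq0 X d Hd), (eq0_of_le_pow_bound al _ C Hal); [apply metric_ge0, Hd | exact HC].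
Qed.

End JungckContraction.

Theorem theorem4p6 (X : Type) (d : X -> X -> R) (le : X -> X -> Prop) (f g : X -> X)
  (Hd : is_metric d) (Hle : is_partial_order le) (Hne : inhabited X)
  (Hcomplete : complete d)
  (Hi : forall x, exists y, f x = g y)
  (Hii : g_comparable le f g)
  (Hiii : compatible d f g)
  (Hiv : continuous_map d g)
  (Hv : continuous_map d f \/ g_TCC d le g)
  (Hvi : exists x0, comparable le (g x0) (f x0))
  (Hvii : exists alpha, 0 <= alpha < 1 /\
     forall x y, comparable le (g x) (g y) -> d (f x) (f y) <= alpha * d (g x) (g y))
  (Hu0 : forall x y, chain_class_nonempty le (f x) (f y) (image g)) :
  exists z, (z = g z /\ z = f z) /\ forall w, w = g w /\ w = f w -> w = z.
Proof.
  destruct Hvii as [al [Hal Hcontr]].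
  destruct Hvi as [x0 Hx0].
  destruct (choice _ Hi) as [h Hh].
  pose proof (proj1 Hle) as Hle_refl.
  assert (Hstart : forall x, exists t, t 0%nat = x /\ jungck_seq f g t).
  { intros x. exists (fun n => Nat.iter n h x). split; [reflexivity | apply jungck_seq_iter, Hh]. }
  set (s := fun n => Nat.iter n h x0).
  assert (Hs : jungck_seq f g s) by (apply jungck_seq_iter, Hh).
  assert (Hs01 : comparable le (g (s 0%nat)) (g (s 1%nat))) by (rewrite Hs; exact Hx0).
  destruct (jungck_seq_steps X d le f g al Hii Hal Hcontr s Hs Hs01) as [Hmono Hsteps].
  destruct (Hcomplete _ (cauchy_of_geometric_steps X d Hd _ _ _ Hal Hsteps)) as [z Hz].
  assert (Hz_coinc : g z = f z)
    by exact (jungck_limit_coincidence X d le f g al Hd Hal Hcontr s z Hiii Hiv Hv Hs Hmono Hz).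
  assert (Hw_coinc : g (g z) = f (g z)).
  { rewrite <- (compatible_commute_at_coincidence X d Hd f g z Hiii Hz_coinc). congruence. }
  assert (Hunique : forall v, g v = f v -> g v = g z).
  { intros v Hv_coinc.
    exact (coincidence_value_unique X d le f g al Hd Hle_refl Hii Hal Hcontr Hstart
             v z Hv_coinc Hz_coinc (Hu0 v z)). }
  exists (g z). split.
  - rewrite <- Hw_coinc, (Hunique (g z) Hw_coinc). split; reflexivity.
  - intros w [Hwg Hwf].
    rewrite Hwg at 1. apply Hunique. congruence.
Qed.
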